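(* Let $\phi=k_1\wedge\dots\wedge k_m$ be a 3CNF in propositional variables $p_1,\dots,p_n$, and let $F(x_1,\dots,x_n,y_1,\dots,y_m)$ be any non-commutative formula over $GF(2)$. Then the propositional formula $$\Big(\neg F_{bool}(\bar p,\bar 0)\ \wedge\ F_{bool}\big(\bar p, Q^\phi_{1,bool}(\bar p),\dots,Q^\phi_{m,bool}(\bar p)\big)\Big)\ \rightarrow\ \neg\phi$$ has a Frege proof of size polynomial in the sizes of $F$ and $\phi$.
   Context: For a non-commutative formula $G$ over $GF(2)$, $G_{bool}$ is the Boolean formula obtained by replacing every $+$ gate by $\oplus$ (XOR), every $\times$ gate by $\wedge$, constants $0,1$ by $\mathsf{false},\mathsf{true}$, and each variable $x_i$ by $p_i$; $F_{bool}(\bar p,\bar 0)$ means $y_j$ replaced by $\mathsf{false}$, and $F_{bool}(\bar p,Q_{1,bool},\dots)$ means each $y_j$ replaced by the formula $Q^\phi_{j,bool}(\bar p)$. $Q^\phi_i=\mathrm{tr}'(k_i)$, where $\mathrm{tr}'(x)=1+x$ (i.e. $1-x$ over $GF(2)$), $\mathrm{tr}'(\neg x)=x$, and $\mathrm{tr}'(\ell_1\lor\dots\lor\ell_r)=\mathrm{tr}'(\ell_1)\cdots\mathrm{tr}'(\ell_r)$ (a tree of product gates). Frege: a fixed propositional proof system with finitely many sound axiom schemes and rules, implicationally complete, lines being Boolean formulas; size = total number of symbols. *)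

From Stdlib Require Import List Arith.
Import ListNotations.

(** * Boolean (propositional) formulas; variable p_i is [FVar i] (0-indexed). *)
Inductive form : Type :=
| FVar (i : nat)
| FTop | FBot
| FNot (A : form)
| FAnd (A B : form)
| FOr  (A B : form)
| FImp (A B : form)
| FXor (A B : form).

Fixpoint form_size (A : form) : nat :=
  match A with
  | FVar _ | FTop | FBot => 1
  | FNot A => S (form_size A)
  | FAnd A B | FOr A B | FImp A B | FXor A B => S (form_size A + form_size B)
  end.

(** Kleene's axioms for ->, /\, \/, ~, plus defining axioms for
    true, false and xor.  This is sound and implicationally complete. *)
Definition frege_axiom (f : form) : Prop :=
  exists A B C : form,
     f = FImp A (FImp B A)
  \/ f = FImp (FImp A B) (FImp (FImp A (FImp B C)) (FImp A C))
  \/ f = FImp A (FImp B (FAnd A B))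
  \/ f = FImp (FAnd A B) A
  \/ f = FImp (FAnd A B) B
  \/ f = FImp A (FOr A B)
  \/ f = FImp B (FOr A B)
  \/ f = FImp (FImp A C) (FImp (FImp B C) (FImp (FOr A B) C))
  \/ f = FImp (FImp A B) (FImp (FImp A (FNot B)) (FNot A))
  \/ f = FImp (FNot (FNot A)) A
  \/ f = FTop
  \/ f = FNot FBot
  \/ f = FImp (FXor A B) (FAnd (FOr A B) (FNot (FAnd A B)))
  \/ f = FImp (FAnd (FOr A B) (FNot (FAnd A B))) (FXor A B).

Definition frege_step (prev : list form) (f : form) : Prop :=
  frege_axiom f \/ exists A, In A prev /\ In (FImp A f) prev.

(** [frege_derivation L]: L is a derivation written in reverse order
    (head = last line). *)
Inductive frege_derivation : list form -> Prop :=
| fd_nil : frege_derivation []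
| fd_cons (f : form) (L : list form) :
    frege_derivation L -> frege_step L f -> frege_derivation (f :: L).

Definition frege_proof (L : list form) (goal : form) : Prop :=
  frege_derivation L /\ hd_error L = Some goal.

Definition proof_size (L : list form) : nat :=
  fold_right (fun f s => form_size f + s) 0 L.

Inductive ncf : Type :=
| NX (i : nat)
| NY (j : nat)
| NC (b : bool)            (* constants 0 (false) and 1 (true) *)
| NAdd (a b : ncf)
| NMul (a b : ncf).

Fixpoint ncf_size (g : ncf) : nat :=
  match g with
  | NX _ | NY _ | NC _ => 1
  | NAdd a b | NMul a b => S (ncf_size a + ncf_size b)
  end.

Fixpoint ncf_vars_ok (n m : nat) (g : ncf) : Prop :=
  match g with
  | NX i => i < n
  | NY j => j < m
  | NC _ => True
  | NAdd a b | NMul a b => ncf_vars_ok n m a /\ ncf_vars_ok n m b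
  end.

Fixpoint ncf_bool (sy : nat -> form) (g : ncf) : form :=
  match g with
  | NX i => FVar i
  | NY j => sy j
  | NC b => if b then FTop else FBot
  | NAdd a b => FXor (ncf_bool sy a) (ncf_bool sy b)
  | NMul a b => FAnd (ncf_bool sy a) (ncf_bool sy b)
  end.

(** * CNFs. A literal (i, true) is p_i, (i, false) is ~p_i. *)
Definition literal := (nat * bool)%type.
Definition clause := list literal.
Definition cnf := list clause.

Definition lit_bool (l : literal) : form :=
  if snd l then FVar (fst l) else FNot (FVar (fst l)).

Fixpoint clause_bool (k : clause) : form :=
  match k with
  | [] => FBot
  | [l] => lit_bool l
  | l :: ls => FOr (lit_bool l) (clause_bool ls)
  end.

Fixpoint cnf_bool (phi : cnf) : form :=
  match phi with
  | [] => FTop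
  | [k] => clause_bool k
  | k :: ks => FAnd (clause_bool k) (cnf_bool ks)
  end.

Definition is_3cnf (n : nat) (phi : cnf) : Prop :=
  Forall (fun k => length k = 3 /\ Forall (fun l => fst l < n) k) phi.

Definition trp_lit (l : literal) : ncf :=
  if snd l then NAdd (NC true) (NX (fst l)) else NX (fst l).

Fixpoint trp_clause (k : clause) : ncf :=
  match k with
  | [] => NC true
  | [l] => trp_lit l
  | l :: ls => NMul (trp_lit l) (trp_clause ls)
  end.

Definition Q (phi : cnf) (j : nat) : ncf := trp_clause (nth j phi []).
Definition Q_bool (phi : cnf) (j : nat) : form := ncf_bool (fun _ => FBot) (Q phi j).

Definition lemma5p3_formula (phi : cnf) (F : ncf) : form :=
  FImp (FAnd (FNot (ncf_bool (fun _ => FBot) F)) (ncf_bool (Q_bool phi) F))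
       (FNot (cnf_bool phi)).

(** Let [P] be the translation of [phi]. By induction on [G], Frege proves
    [P -> (G_bool(Q) <-> G_bool(0))] in size [O(|G| * N^2)], [N = |F| + |phi|]:
    for a variable [y_j], the clause [k_j] makes one of its literals true, which
    makes the corresponding factor [tr'(l)] of [Q_j] false, so [P -> (Q_j <-> false)];
    all other cases are congruences.  The theorem is then the contrapositive.
    Every step is a substitution instance of one of finitely many fixed tautologies,
    and a substitution instance of a fixed Frege proof is only linearly larger than
    the substituted formulas. *)

From Stdlib Require Import List Arith Lia.
Import ListNotations.

Lemma frege_step_weaken L L' f :
  incl L L' -> frege_step L f -> frege_step L' f.
Proof. intros H [Hax|[A [H1 H2]]]; [left; exact Hax|right; exists A; auto]. Qed.

Lemma frege_derivation_app L1 L2 :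
  frege_derivation L1 -> frege_derivation L2 -> frege_derivation (L2 ++ L1).
Proof.
  intros H1 H2. induction H2 as [|f L2 _ IH Hstep]; [exact H1|].
  constructor; [exact IH|].
  eapply frege_step_weaken; [|exact Hstep]. apply incl_appl, incl_refl.
Qed.

Lemma proof_size_app L1 L2 : proof_size (L1 ++ L2) = proof_size L1 + proof_size L2.
Proof. induction L1; simpl; lia. Qed.

Lemma frege_proof_mp L1 L2 A B :
  frege_proof L1 A -> frege_proof L2 (FImp A B) ->
  frege_proof (B :: L2 ++ L1) B.
Proof.
  intros [D1 H1] [D2 H2]. split; [|reflexivity].
  constructor; [now apply frege_derivation_app|].
  right. exists A. split.
  - destruct L1; inversion H1; subst. apply in_or_app; right; left; reflexivity.
  - destruct L2; inversion H2; subst. apply in_or_app; left; left; reflexivity.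
Qed.

Definition frege_provable (s : nat) (f : form) : Prop :=
  exists L, frege_proof L f /\ proof_size L <= s.

Lemma frege_provable_size s f : frege_provable s f -> form_size f <= s.
Proof. intros [L [[_ H] Hs]]. destruct L; inversion H; subst. simpl in Hs; lia. Qed.

Lemma frege_provable_mono s s' f : s <= s' -> frege_provable s f -> frege_provable s' f.
Proof. intros H [L [HL Hs]]. exists L; split; [exact HL|lia]. Qed.

Lemma frege_provable_mp s1 s2 A B :
  frege_provable s1 A -> frege_provable s2 (FImp A B) ->
  frege_provable (s1 + s2 + form_size B) B.
Proof.
  intros [L1 [H1 S1]] [L2 [H2 S2]]. exists (B :: L2 ++ L1). split.
  - eapply frege_proof_mp; eassumption.
  - simpl. rewrite proof_size_app. lia.
Qed.

(* Every intermediate conclusion is a subformula of the implication proved in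
   size [t], so each modus ponens step costs at most [t]. *)
Lemma frege_provable_rule As B ss t :
  Forall2 frege_provable ss As -> frege_provable t (fold_right FImp B As) ->
  frege_provable (list_sum ss + S (length As) * t) B.
Proof.
  intros Hs Ht.
  enough (Hgen : forall u, frege_provable u (fold_right FImp B As) ->
            frege_provable (u + list_sum ss + length As * t) B)
    by (eapply frege_provable_mono; [|exact (Hgen t Ht)]; lia).
  pose proof (frege_provable_size _ _ Ht) as Hsize. clear Ht.
  induction Hs as [|s A ss As HA Hs IH]; intros u Hu; simpl in *.
  - eapply frege_provable_mono; [|exact Hu]. lia.
  - pose proof (frege_provable_mp _ _ _ _ HA Hu) as Hmp.
    eapply frege_provable_mono; [|apply (IH ltac:(lia) _ Hmp)]. lia.
Qed.

Fixpoint subst (s : nat -> form) (f : form) : form :=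
  match f with
  | FVar i => s i
  | FTop => FTop
  | FBot => FBot
  | FNot A => FNot (subst s A)
  | FAnd A B => FAnd (subst s A) (subst s B)
  | FOr A B => FOr (subst s A) (subst s B)
  | FImp A B => FImp (subst s A) (subst s B)
  | FXor A B => FXor (subst s A) (subst s B)
  end.

Ltac choose_disjunct := repeat (solve [left; reflexivity] || right); try reflexivity.

Lemma frege_axiom_subst s f : frege_axiom f -> frege_axiom (subst s f).
Proof.
  intros (A & B & C & H). exists (subst s A), (subst s B), (subst s C).
  repeat destruct H as [H|H]; subst; simpl; choose_disjunct.
Qed.

Lemma frege_derivation_subst s L :
  frege_derivation L -> frege_derivation (map (subst s) L).
Proof.
  induction 1 as [|f L _ IH [Hax|[A [H1 H2]]]]; simpl; constructor; auto.
  - left; now apply frege_axiom_subst.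
  - right; exists (subst s A).
    split; [exact (in_map (subst s) _ _ H1)|exact (in_map (subst s) _ _ H2)].
Qed.

(* Variables beyond the list are sent to [FTop], the default of [nth]. *)
Definition list_subst (l : list form) (i : nat) : form := nth i l FTop.

Definition weight (l : list form) : nat := S (list_sum (map form_size l)).

Lemma form_size_list_subst l i : form_size (list_subst l i) <= weight l.
Proof.
  unfold list_subst, weight. revert i.
  induction l as [|A l IH]; intros [|i]; simpl; try lia. specialize (IH i); lia.
Qed.

Lemma form_size_subst l f : form_size (subst (list_subst l) f) <= form_size f * weight l.
Proof.
  assert (1 <= weight l) by (unfold weight; lia).
  induction f; cbn [subst form_size]; try nia. rewrite Nat.mul_1_l. apply form_size_list_subst.
Qed.

Lemma proof_size_subst l L :
  proof_size (map (subst (list_subst l)) L) <= proof_size L * weight l.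
Proof.
  induction L as [|f L IH]; simpl; [lia|].
  pose proof (form_size_subst l f). nia.
Qed.

Definition schema_bound (K : nat) (T : form) : Prop :=
  forall l, frege_provable (K * weight l) (subst (list_subst l) T).

Lemma frege_proof_schema_bound L T : frege_proof L T -> schema_bound (proof_size L) T.
Proof.
  intros [D HL] l. exists (map (subst (list_subst l)) L). split; [split|].
  - now apply frege_derivation_subst.
  - destruct L; inversion HL; reflexivity.
  - apply proof_size_subst.
Qed.

Lemma schema_bound_mono K K' T : K <= K' -> schema_bound K T -> schema_bound K' T.
Proof. intros H HT l. eapply frege_provable_mono; [|apply HT]. nia. Qed.

Inductive derives (G : list form) : form -> Prop :=
| derives_axiom f : frege_axiom f -> derives G f
| derives_hyp f : In f G -> derives G f
| derives_mp A B : derives G A -> derives G (FImp A B) -> derives G B.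

Lemma derives_frege_proof f : derives [] f -> exists L, frege_proof L f.
Proof.
  intro H. remember (@nil form) as G.
  induction H as [f Hax|f Hin|A B _ [L1 H1] _ [L2 H2]]; subst.
  - exists [f]. split; [|reflexivity]. constructor; [constructor|left; exact Hax].
  - destruct Hin.
  - exists (B :: L2 ++ L1). eapply frege_proof_mp; eassumption.
Qed.

Lemma derives_schema_bound T : derives [] T -> exists K, schema_bound K T.
Proof.
  intro H. destruct (derives_frege_proof T H) as [L HL].
  exists (proof_size L). now apply frege_proof_schema_bound.
Qed.

Ltac by_axiom A B C := apply derives_axiom; exists A, B, C; choose_disjunct.
Ltac by_hyp := apply derives_hyp; simpl; tauto.

Lemma derives_weaken G G' f : incl G G' -> derives G f -> derives G' f.
Proof.
  intros Hincl. induction 1 as [f Hax|f Hin|A B _ IHA _ IHAB].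
  - now apply derives_axiom.
  - apply derives_hyp, Hincl, Hin.
  - exact (derives_mp _ _ _ IHA IHAB).
Qed.

Lemma derives_cons G X f : derives G f -> derives (X :: G) f.
Proof. apply derives_weaken, incl_tl, incl_refl. Qed.

Lemma derives_imp_refl G A : derives G (FImp A A).
Proof.
  apply (derives_mp _ (FImp A (FImp (FImp A A) A))); [by_axiom A (FImp A A) A|].
  apply (derives_mp _ (FImp A (FImp A A))); [by_axiom A A A|].
  by_axiom A (FImp A A) A.
Qed.

Lemma deduction G A B : derives (A :: G) B -> derives G (FImp A B).
Proof.
  induction 1 as [f Hax|f [<-|Hin]|C D _ IHC _ IHCD].
  - eapply derives_mp; [apply derives_axiom; exact Hax|by_axiom f A A].
  - apply derives_imp_refl.
  - eapply derives_mp; [apply derives_hyp; exact Hin|by_axiom f A A].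
  - eapply derives_mp; [exact IHCD|]. eapply derives_mp; [exact IHC|]. by_axiom A C D.
Qed.

Section NaturalDeduction.

Variable G : list form.

Lemma imp_elim A B : derives G (FImp A B) -> derives G A -> derives G B.
Proof. intros; eapply derives_mp; eauto. Qed.

Lemma and_intro A B : derives G A -> derives G B -> derives G (FAnd A B).
Proof.
  intros. apply (imp_elim B); [apply (imp_elim A); [by_axiom A B A|]|]; auto.
Qed.

Lemma and_elim_l A B : derives G (FAnd A B) -> derives G A.
Proof. apply imp_elim. by_axiom A B A. Qed.

Lemma and_elim_r A B : derives G (FAnd A B) -> derives G B.
Proof. apply imp_elim. by_axiom A B A. Qed.

Lemma or_intro_l A B : derives G A -> derives G (FOr A B).
Proof. apply imp_elim. by_axiom A B A. Qed.

Lemma or_intro_r A B : derives G B -> derives G (FOr A B).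
Proof. apply imp_elim. by_axiom A B A. Qed.

Lemma or_elim A B C :
  derives G (FImp A C) -> derives G (FImp B C) -> derives G (FOr A B) -> derives G C.
Proof.
  intros HA HB. apply (imp_elim (FOr A B)).
  apply (imp_elim (FImp B C)); [apply (imp_elim (FImp A C)); [by_axiom A B C|]|]; auto.
Qed.

Lemma not_intro A B :
  derives G (FImp A B) -> derives G (FImp A (FNot B)) -> derives G (FNot A).
Proof.
  intros H1. apply (imp_elim (FImp A (FNot B))).
  apply (imp_elim (FImp A B)); [by_axiom A B A|exact H1].
Qed.

Lemma not_not_elim A : derives G (FNot (FNot A)) -> derives G A.
Proof. apply imp_elim. by_axiom A A A. Qed.

Lemma top_intro : derives G FTop.
Proof. by_axiom FTop FTop FTop. Qed.

Lemma not_bot : derives G (FNot FBot).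
Proof. by_axiom FTop FTop FTop. Qed.

Lemma xor_elim_or A B : derives G (FXor A B) -> derives G (FOr A B).
Proof.
  intro H. apply (and_elim_l _ (FNot (FAnd A B))).
  apply (imp_elim (FXor A B)); [by_axiom A B A|exact H].
Qed.

Lemma xor_elim_nand A B : derives G (FXor A B) -> derives G (FNot (FAnd A B)).
Proof.
  intro H. apply (and_elim_r (FOr A B)).
  apply (imp_elim (FXor A B)); [by_axiom A B A|exact H].
Qed.

Lemma xor_intro A B :
  derives G (FOr A B) -> derives G (FNot (FAnd A B)) -> derives G (FXor A B).
Proof.
  intros. apply (imp_elim (FAnd (FOr A B) (FNot (FAnd A B)))); [by_axiom A B A|].
  now apply and_intro.
Qed.

Lemma not_elim A B : derives G A -> derives G (FNot A) -> derives G B.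
Proof.
  intros HA HnA. apply not_not_elim. apply (not_intro _ A).
  - apply (imp_elim A); [by_axiom A (FNot B) A|exact HA].
  - apply (imp_elim (FNot A)); [by_axiom (FNot A) (FNot B) A|exact HnA].
Qed.

Lemma bot_elim B : derives G FBot -> derives G B.
Proof. intro H. exact (not_elim _ _ H not_bot). Qed.

End NaturalDeduction.

Lemma not_intro_bot G A : derives (A :: G) FBot -> derives G (FNot A).
Proof.
  intro H. apply (not_intro _ _ FBot); [now apply deduction|].
  apply (imp_elim _ (FNot FBot)); [by_axiom (FNot FBot) A A|apply not_bot].
Qed.

Definition FIff (A B : form) : form := FAnd (FImp A B) (FImp B A).

Lemma and_cong G A A' B B' :
  derives G (FImp A A') -> derives G (FImp B B') ->
  derives G (FImp (FAnd A B) (FAnd A' B')).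
Proof.
  intros HA HB. apply deduction. apply and_intro.
  - eapply imp_elim; [apply derives_cons, HA|eapply and_elim_l; by_hyp].
  - eapply imp_elim; [apply derives_cons, HB|eapply and_elim_r; by_hyp].
Qed.

Lemma xor_cong G A A' B B' :
  derives G (FImp A A') -> derives G (FImp A' A) ->
  derives G (FImp B B') -> derives G (FImp B' B) ->
  derives G (FImp (FXor A B) (FXor A' B')).
Proof.
  intros HA HA' HB HB'. apply deduction. apply xor_intro.
  - apply (or_elim _ A B); [| |eapply xor_elim_or; by_hyp].
    + apply deduction, or_intro_l. eapply imp_elim; [do 2 apply derives_cons; eauto|by_hyp].
    + apply deduction, or_intro_r. eapply imp_elim; [do 2 apply derives_cons; eauto|by_hyp].
  - apply not_intro_bot. eapply not_elim; [|eapply xor_elim_nand; by_hyp].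
    apply and_intro.
    + eapply imp_elim; [do 2 apply derives_cons; eauto|eapply and_elim_l; by_hyp].
    + eapply imp_elim; [do 2 apply derives_cons; eauto|eapply and_elim_r; by_hyp].
Qed.

Local Notation v0 := (FVar 0).
Local Notation v1 := (FVar 1).
Local Notation v2 := (FVar 2).
Local Notation v3 := (FVar 3).
Local Notation v4 := (FVar 4).
Local Notation v5 := (FVar 5).
Local Notation v6 := (FVar 6).

Definition taut_id := FImp v0 v0.
Definition taut_iff_refl := FImp v0 (FIff v1 v1).
Definition taut_iff_and :=
  FImp (FImp v0 (FIff v1 v2)) (FImp (FImp v0 (FIff v3 v4))
    (FImp v0 (FIff (FAnd v1 v3) (FAnd v2 v4)))).
Definition taut_iff_xor :=
  FImp (FImp v0 (FIff v1 v2)) (FImp (FImp v0 (FIff v3 v4))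
    (FImp v0 (FIff (FXor v1 v3) (FXor v2 v4)))).
Definition taut_and_l := FImp (FImp v0 (FAnd v1 v2)) (FImp v0 v1).
Definition taut_and_r := FImp (FImp v0 (FAnd v1 v2)) (FImp v0 v2).
Definition taut_not_xor_top := FImp v0 (FNot (FXor FTop v0)).
Definition taut_clause :=
  FImp (FImp v0 (FOr v1 (FOr v2 v3)))
    (FImp (FImp v1 (FNot v4)) (FImp (FImp v2 (FNot v5)) (FImp (FImp v3 (FNot v6))
      (FImp v0 (FIff (FAnd v4 (FAnd v5 v6)) FBot))))).
Definition taut_contrapose :=
  FImp (FImp v0 (FIff v1 v2)) (FImp (FAnd (FNot v2) v1) (FNot v0)).

Lemma derives_taut_id : derives [] taut_id.
Proof. apply derives_imp_refl. Qed.

Lemma derives_taut_iff_refl : derives [] taut_iff_refl.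
Proof. apply deduction. apply and_intro; apply derives_imp_refl. Qed.

Lemma derives_taut_iff_and : derives [] taut_iff_and.
Proof.
  do 3 apply deduction.
  assert (H12 : derives [v0; FImp v0 (FIff v3 v4); FImp v0 (FIff v1 v2)] (FIff v1 v2))
    by (eapply imp_elim; by_hyp).
  assert (H34 : derives [v0; FImp v0 (FIff v3 v4); FImp v0 (FIff v1 v2)] (FIff v3 v4))
    by (eapply imp_elim; by_hyp).
  apply and_intro; apply and_cong; eauto using and_elim_l, and_elim_r.
Qed.

Lemma derives_taut_iff_xor : derives [] taut_iff_xor.
Proof.
  do 3 apply deduction.
  assert (H12 : derives [v0; FImp v0 (FIff v3 v4); FImp v0 (FIff v1 v2)] (FIff v1 v2))
    by (eapply imp_elim; by_hyp).
  assert (H34 : derives [v0; FImp v0 (FIff v3 v4); FImp v0 (FIff v1 v2)] (FIff v3 v4))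
    by (eapply imp_elim; by_hyp).
  apply and_intro; apply xor_cong; eauto using and_elim_l, and_elim_r.
Qed.

Lemma derives_taut_and_l : derives [] taut_and_l.
Proof. do 2 apply deduction. eapply and_elim_l. eapply imp_elim; by_hyp. Qed.

Lemma derives_taut_and_r : derives [] taut_and_r.
Proof. do 2 apply deduction. eapply and_elim_r. eapply imp_elim; by_hyp. Qed.

Lemma derives_taut_not_xor_top : derives [] taut_not_xor_top.
Proof.
  apply deduction, not_intro_bot.
  eapply not_elim; [|eapply xor_elim_nand; by_hyp].
  apply and_intro; [apply top_intro|by_hyp].
Qed.

Lemma derives_taut_clause : derives [] taut_clause.
Proof.
  do 5 apply deduction. apply and_intro; apply deduction; [|apply bot_elim; by_hyp].
  apply (or_elim _ v1 (FOr v2 v3)); [| |apply (imp_elim _ v0); by_hyp].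
  - apply deduction. apply (not_elim _ v4); [|apply (imp_elim _ v1); by_hyp].
    apply (and_elim_l _ _ (FAnd v5 v6)); by_hyp.
  - apply deduction. apply (or_elim _ v2 v3); [| |by_hyp]; apply deduction.
    + apply (not_elim _ v5); [|apply (imp_elim _ v2); by_hyp].
      apply (and_elim_l _ _ v6), (and_elim_r _ v4); by_hyp.
    + apply (not_elim _ v6); [|apply (imp_elim _ v3); by_hyp].
      apply (and_elim_r _ v5), (and_elim_r _ v4); by_hyp.
Qed.

Lemma derives_taut_contrapose : derives [] taut_contrapose.
Proof.
  do 2 apply deduction. apply not_intro_bot.
  eapply not_elim; [|eapply and_elim_l; by_hyp].
  eapply imp_elim; [eapply and_elim_l, imp_elim; by_hyp|eapply and_elim_r; by_hyp].
Qed.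

Record schema_bounds (K : nat) : Prop := {
  bound_id : schema_bound K taut_id;
  bound_iff_refl : schema_bound K taut_iff_refl;
  bound_iff_and : schema_bound K taut_iff_and;
  bound_iff_xor : schema_bound K taut_iff_xor;
  bound_and_l : schema_bound K taut_and_l;
  bound_and_r : schema_bound K taut_and_r;
  bound_not_xor_top : schema_bound K taut_not_xor_top;
  bound_clause : schema_bound K taut_clause;
  bound_contrapose : schema_bound K taut_contrapose }.

Lemma schema_bounds_exist : exists K, schema_bounds K.
Proof.
  destruct (derives_schema_bound _ derives_taut_id) as [K1 H1].
  destruct (derives_schema_bound _ derives_taut_iff_refl) as [K2 H2].
  destruct (derives_schema_bound _ derives_taut_iff_and) as [K3 H3].
  destruct (derives_schema_bound _ derives_taut_iff_xor) as [K4 H4].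
  destruct (derives_schema_bound _ derives_taut_and_l) as [K5 H5].
  destruct (derives_schema_bound _ derives_taut_and_r) as [K6 H6].
  destruct (derives_schema_bound _ derives_taut_not_xor_top) as [K7 H7].
  destruct (derives_schema_bound _ derives_taut_clause) as [K8 H8].
  destruct (derives_schema_bound _ derives_taut_contrapose) as [K9 H9].
  exists (K1 + K2 + K3 + K4 + K5 + K6 + K7 + K8 + K9).
  constructor; (eapply schema_bound_mono; [|eassumption]); lia.
Qed.

Lemma form_size_pos f : 1 <= form_size f.
Proof. destruct f; simpl; lia. Qed.

Lemma cnf_bool_cons2 k k' ks :
  cnf_bool (k :: k' :: ks) = FAnd (clause_bool k) (cnf_bool (k' :: ks)).
Proof. reflexivity. Qed.

Lemma length_le_form_size_cnf ks : length ks <= form_size (cnf_bool ks).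
Proof.
  induction ks as [|k [|k' ks] IH]; [simpl; lia|apply form_size_pos|].
  rewrite cnf_bool_cons2. simpl in *. lia.
Qed.

Lemma is_3cnf_nth n phi j :
  is_3cnf n phi -> j < length phi -> exists l1 l2 l3, nth j phi [] = [l1; l2; l3].
Proof.
  intros H Hj. unfold is_3cnf in H. rewrite Forall_forall in H.
  destruct (H _ (nth_In phi [] Hj)) as [Hlen _].
  destruct (nth j phi []) as [|l1 [|l2 [|l3 [|l4 k]]]]; simpl in Hlen; try lia. eauto.
Qed.

Lemma form_size_Q_bool n phi j :
  is_3cnf n phi -> j < length phi -> form_size (Q_bool phi j) <= 11.
Proof.
  intros H Hj. destruct (is_3cnf_nth n phi j H Hj) as (l1 & l2 & l3 & Hk).
  unfold Q_bool, Q. rewrite Hk.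
  destruct l1 as [? []], l2 as [? []], l3 as [? []]; simpl; lia.
Qed.

Lemma form_size_ncf_bool_Q n phi G :
  is_3cnf n phi -> ncf_vars_ok n (length phi) G ->
  form_size (ncf_bool (Q_bool phi) G) <= 11 * ncf_size G.
Proof.
  intro H. induction G as [i|j|[]|G1 IH1 G2 IH2|G1 IH1 G2 IH2]; simpl; intro HV; try lia.
  - pose proof (form_size_Q_bool n phi j H HV). lia.
  - destruct HV as [HV1 HV2]. specialize (IH1 HV1). specialize (IH2 HV2). lia.
  - destruct HV as [HV1 HV2]. specialize (IH1 HV1). specialize (IH2 HV2). lia.
Qed.

Lemma form_size_ncf_bool_false G : form_size (ncf_bool (fun _ => FBot) G) = ncf_size G.
Proof. induction G as [| |[]| |]; simpl; lia. Qed.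

Definition trp_lit_bool (l : literal) : form := ncf_bool (fun _ => FBot) (trp_lit l).

Lemma form_size_lit_bool l : form_size (lit_bool l) <= 2.
Proof. destruct l as [i []]; simpl; lia. Qed.

Lemma form_size_trp_lit_bool l : form_size (trp_lit_bool l) <= 3.
Proof. destruct l as [i []]; simpl; lia. Qed.

Section Simulation.

Variable K : nat.
Hypothesis HK : schema_bounds K.

Ltac by_schema bound l prems :=
  eapply frege_provable_mono;
  [|apply (frege_provable_rule prems);
    [repeat (apply Forall2_cons; [eassumption|]); apply Forall2_nil
    |exact (bound _ HK l)]];
  unfold weight; simpl; nia.

Lemma frege_id P : frege_provable (K * weight [P]) (FImp P P).
Proof. exact (bound_id _ HK [P]). Qed.

Lemma frege_iff_refl P A : frege_provable (K * weight [P; A]) (FImp P (FIff A A)).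
Proof. exact (bound_iff_refl _ HK [P; A]). Qed.

Lemma frege_iff_and P A A' C C' s1 s2 :
  frege_provable s1 (FImp P (FIff A A')) -> frege_provable s2 (FImp P (FIff C C')) ->
  frege_provable (s1 + s2 + 3 * (K * weight [P; A; A'; C; C']))
    (FImp P (FIff (FAnd A C) (FAnd A' C'))).
Proof.
  intros. by_schema bound_iff_and [P; A; A'; C; C']
    [FImp P (FIff A A'); FImp P (FIff C C')].
Qed.

Lemma frege_iff_xor P A A' C C' s1 s2 :
  frege_provable s1 (FImp P (FIff A A')) -> frege_provable s2 (FImp P (FIff C C')) ->
  frege_provable (s1 + s2 + 3 * (K * weight [P; A; A'; C; C']))
    (FImp P (FIff (FXor A C) (FXor A' C'))).
Proof.
  intros. by_schema bound_iff_xor [P; A; A'; C; C']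
    [FImp P (FIff A A'); FImp P (FIff C C')].
Qed.

Lemma frege_and_l P X Y s :
  frege_provable s (FImp P (FAnd X Y)) ->
  frege_provable (s + 2 * (K * weight [P; X; Y])) (FImp P X).
Proof. intros. by_schema bound_and_l [P; X; Y] [FImp P (FAnd X Y)]. Qed.

Lemma frege_and_r P X Y s :
  frege_provable s (FImp P (FAnd X Y)) ->
  frege_provable (s + 2 * (K * weight [P; X; Y])) (FImp P Y).
Proof. intros. by_schema bound_and_r [P; X; Y] [FImp P (FAnd X Y)]. Qed.

Lemma frege_contrapose P X Y s :
  frege_provable s (FImp P (FIff X Y)) ->
  frege_provable (s + 2 * (K * weight [P; X; Y])) (FImp (FAnd (FNot Y) X) (FNot P)).
Proof. intros. by_schema bound_contrapose [P; X; Y] [FImp P (FIff X Y)]. Qed.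

Lemma frege_lit_falsifies_trp l :
  frege_provable (3 * K) (FImp (lit_bool l) (FNot (trp_lit_bool l))).
Proof.
  destruct l as [i []]; unfold lit_bool, trp_lit_bool, trp_lit; simpl.
  - eapply frege_provable_mono; [|exact (bound_not_xor_top _ HK [FVar i])].
    unfold weight; simpl; lia.
  - eapply frege_provable_mono; [|exact (bound_id _ HK [FNot (FVar i)])].
    unfold weight; simpl; lia.
Qed.

Lemma frege_clause_Q_false P l1 l2 l3 s :
  frege_provable s (FImp P (clause_bool [l1; l2; l3])) ->
  frege_provable (s + 5 * (K * (18 + form_size P)))
    (FImp P (FIff (ncf_bool (fun _ => FBot) (trp_clause [l1; l2; l3])) FBot)).
Proof.
  intro Hcl.
  pose proof (frege_lit_falsifies_trp l1). pose proof (frege_lit_falsifies_trp l2).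
  pose proof (frege_lit_falsifies_trp l3).
  pose proof (form_size_lit_bool l1). pose proof (form_size_lit_bool l2).
  pose proof (form_size_lit_bool l3). pose proof (form_size_trp_lit_bool l1).
  pose proof (form_size_trp_lit_bool l2). pose proof (form_size_trp_lit_bool l3).
  by_schema bound_clause
    [P; lit_bool l1; lit_bool l2; lit_bool l3; trp_lit_bool l1; trp_lit_bool l2; trp_lit_bool l3]
    [FImp P (FOr (lit_bool l1) (FOr (lit_bool l2) (lit_bool l3)));
     FImp (lit_bool l1) (FNot (trp_lit_bool l1));
     FImp (lit_bool l2) (FNot (trp_lit_bool l2));
     FImp (lit_bool l3) (FNot (trp_lit_bool l3))].
Qed.

Lemma frege_cnf_clause P ks j s :
  j < length ks -> frege_provable s (FImp P (cnf_bool ks)) ->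
  frege_provable (s + 2 * S j * (K * weight [P; cnf_bool ks]))
    (FImp P (clause_bool (nth j ks []))).
Proof.
  revert j s. induction ks as [|k [|k' ks] IH]; intros j s Hj H; simpl in Hj; [lia| |].
  - destruct j; [|lia]. eapply frege_provable_mono; [|exact H]. lia.
  - rewrite cnf_bool_cons2 in *. destruct j as [|j].
    + eapply frege_provable_mono; [|exact (frege_and_l _ _ _ _ H)].
      unfold weight; simpl; nia.
    + specialize (IH j _ ltac:(simpl; lia) (frege_and_r _ _ _ _ H)).
      eapply frege_provable_mono; [|exact IH]. unfold weight; simpl; nia.
Qed.

Lemma frege_cnf_Q_false n phi N j :
  is_3cnf n phi -> form_size (cnf_bool phi) <= N -> j < length phi ->
  frege_provable (128 * (K * (N * N))) (FImp (cnf_bool phi) (FIff (Q_bool phi j) FBot)).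
Proof.
  intros H3 HN Hj.
  pose proof (length_le_form_size_cnf phi). pose proof (form_size_pos (cnf_bool phi)).
  pose proof (frege_cnf_clause _ _ _ _ Hj (frege_id (cnf_bool phi))) as Hcl.
  destruct (is_3cnf_nth n phi j H3 Hj) as (l1 & l2 & l3 & Hk).
  unfold Q_bool, Q. rewrite Hk in *.
  eapply frege_provable_mono; [|exact (frege_clause_Q_false _ _ _ _ _ Hcl)].
  set (p := form_size (cnf_bool phi)) in *.
  assert (Hcost : S p + 2 * S j * S (p + p) + 5 * (18 + p) <= 128 * (N * N)) by nia.
  pose proof (Nat.mul_le_mono_l _ _ K Hcost). unfold weight; simpl. lia.
Qed.

Lemma frege_Q_iff_zero n phi N G :
  is_3cnf n phi -> form_size (cnf_bool phi) <= N ->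
  ncf_vars_ok n (length phi) G -> ncf_size G <= N ->
  frege_provable (ncf_size G * (128 * (K * (N * N))))
    (FImp (cnf_bool phi) (FIff (ncf_bool (Q_bool phi) G) (ncf_bool (fun _ => FBot) G))).
Proof.
  intros H3 HN. pose proof (form_size_pos (cnf_bool phi)).
  set (P := cnf_bool phi) in *. set (C := 128 * (K * (N * N))).
  assert (Hconst : forall A, form_size A = 1 -> frege_provable C (FImp P (FIff A A))).
  { intros A HA. eapply frege_provable_mono; [|apply frege_iff_refl].
    assert (Hw : S (form_size P + form_size A) <= 128 * (N * N)) by nia.
    pose proof (Nat.mul_le_mono_l _ _ K Hw). unfold C, weight; simpl. lia. }
  assert (Hnode : forall G1 G2, ncf_vars_ok n (length phi) G1 ->
            ncf_vars_ok n (length phi) G2 -> S (ncf_size G1 + ncf_size G2) <= N ->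
            3 * (K * weight [P; ncf_bool (Q_bool phi) G1; ncf_bool (fun _ => FBot) G1;
                             ncf_bool (Q_bool phi) G2; ncf_bool (fun _ => FBot) G2]) <= C).
  { intros G1 G2 HV1 HV2 HG.
    pose proof (form_size_ncf_bool_Q n phi G1 H3 HV1).
    pose proof (form_size_ncf_bool_Q n phi G2 H3 HV2).
    pose proof (form_size_ncf_bool_false G1). pose proof (form_size_ncf_bool_false G2).
    match goal with |- 3 * (K * ?w) <= _ =>
      assert (Hw : 3 * w <= 128 * (N * N)) by (unfold weight; simpl; nia) end.
    pose proof (Nat.mul_le_mono_l _ _ K Hw). unfold C. lia. }
  induction G as [i|j|[]|G1 IH1 G2 IH2|G1 IH1 G2 IH2]; cbn [ncf_bool ncf_size ncf_vars_ok];
    intros HV HG; try (rewrite Nat.mul_1_l; apply Hconst; reflexivity).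
  - rewrite Nat.mul_1_l. eapply frege_cnf_Q_false; eassumption.
  - destruct HV as [HV1 HV2]. pose proof (Hnode G1 G2 HV1 HV2 HG).
    eapply frege_provable_mono; [|apply frege_iff_xor; [apply IH1|apply IH2]]; auto; lia.
  - destruct HV as [HV1 HV2]. pose proof (Hnode G1 G2 HV1 HV2 HG).
    eapply frege_provable_mono; [|apply frege_iff_and; [apply IH1|apply IH2]]; auto; lia.
Qed.

Lemma frege_lemma5p3_formula n phi F :
  is_3cnf n phi -> ncf_vars_ok n (length phi) F ->
  frege_provable (156 * K * (ncf_size F + form_size (cnf_bool phi)) ^ 3)
    (lemma5p3_formula phi F).
Proof.
  intros H3 HV. set (N := ncf_size F + form_size (cnf_bool phi)).
  pose proof (form_size_pos (cnf_bool phi)).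
  pose proof (form_size_ncf_bool_Q n phi F H3 HV).
  pose proof (form_size_ncf_bool_false F).
  pose proof (frege_Q_iff_zero n phi N F H3 ltac:(lia) HV ltac:(lia)) as Hiff.
  eapply frege_provable_mono; [|exact (frege_contrapose _ _ _ _ Hiff)].
  assert (Hw : weight [cnf_bool phi; ncf_bool (Q_bool phi) F; ncf_bool (fun _ => FBot) F]
               <= 13 * N) by (unfold weight; simpl; lia).
  pose proof (Nat.mul_le_mono_r (ncf_size F) N (128 * (K * (N * N))) ltac:(lia)).
  pose proof (Nat.mul_le_mono_l _ _ (2 * K) Hw).
  assert (HN3 : N <= N * N * N) by nia.
  pose proof (Nat.mul_le_mono_l _ _ (26 * K) HN3).
  simpl. lia.
Qed.

End Simulation.

Lemma mul_cube_le_pow a N : 1 <= N -> a * N ^ 3 <= (a + 3) * N ^ (a + 3).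
Proof.
  intro HN. apply Nat.mul_le_mono; [lia|]. apply Nat.pow_le_mono_r; lia.
Qed.

Theorem lemma5p3 :
  exists c : nat,
    forall (n m : nat) (phi : cnf) (F : ncf),
      length phi = m ->
      is_3cnf n phi ->
      ncf_vars_ok n m F ->
      exists L : list form,
        frege_proof L (lemma5p3_formula phi F) /\
        proof_size L <= c * (ncf_size F + form_size (cnf_bool phi)) ^ c + c.
Proof.
  destruct schema_bounds_exist as [K HK]. exists (156 * K + 3).
  intros n m phi F <- H3 HV.
  destruct (frege_lemma5p3_formula K HK n phi F H3 HV) as [L [HL Hsize]].
  exists L. split; [exact HL|].
  pose proof (mul_cube_le_pow (156 * K) (ncf_size F + form_size (cnf_bool phi))
                (ltac:(pose proof (form_size_pos (cnf_bool phi)); lia))).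
  lia.
Qed.
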